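(* Let $K\in\mathbb{R}^{n\times n}$ be diagonalizable with spectrum $\sigma(K)\subset(-\infty,0)$. Let $\mathcal{A}=I_m\otimes I_n-(I^{(-1)}D)\otimes K$ and $\mathcal{P}=I_m\otimes I_n-(SD)\otimes K$. Then $\mathcal{P}$ is nonsingular, $\mathcal{P}^{-1}\mathcal{A}$ has the eigenvalue $1$ with algebraic multiplicity at least $n(m-1)$ (at most $n$ eigenvalues, counted with multiplicity, differ from $1$), and $\sigma(\mathcal{P}^{-1}\mathcal{A})\subset[1,\infty)$.
   Context: $M\ge1$, $m=2M+1$, $h>0$, $T>0$. Sinc time points $t_j=\dfrac{T e^{jh}}{1+e^{jh}}$, $j=-M,\dots,M$. $D=h\,\mathrm{diag}\big(t_{-M}(T-t_{-M})/T,\dots,t_M(T-t_M)/T\big)$. $I^{(-1)}\in\mathbb{R}^{m\times m}$ is the Toeplitz matrix with entries $I^{(-1)}_{l,j}=\frac12+\int_0^{l-j}\frac{\sin(\pi t)}{\pi t}\,dt$. $S:=\frac12\big(I^{(-1)}-(I^{(-1)})^{\mathsf T}\big)$ (equivalently $S=I^{(-1)}-\frac12 e_me_m^{\mathsf T}$ with $e_m$ the all-ones vector). $\otimes$ is the Kronecker product and $I_p$ the $p\times p$ identity. *)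

From HB Require Import structures.
From mathcomp Require Import all_boot all_order all_algebra.
From mathcomp Require Import all_classical all_reals.
From mathcomp Require Import topology normedtype sequences exp trigo measure
  lebesgue_measure lebesgue_integral.
From mathcomp Require Import complex mxtens.
Set Implicit Arguments. Unset Strict Implicit. Unset Printing Implicit Defensive.
Import Order.TTheory GRing.Theory Num.Theory.
Local Open Scope ring_scope.

(* sin(pi t)/(pi t) (value at t = 0 irrelevant for the integral). *)
Definition sincpi {R : realType} (t : R) : R := sin (pi * t) / (pi * t).

Definition Si {R : realType} (x : R) : R :=
  if 0 <= x then (\int[lebesgue_measure]_(t in `[0, x]%classic) sincpi t)%R
  else (- \int[lebesgue_measure]_(t in `[x, 0]%classic) sincpi t)%R.

Definition Im1 {R : realType} (m : nat) : 'M[R]_m :=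
  \matrix_(l < m, j < m) (2^-1 + Si ((l%:R : R) - (j%:R : R))).

Definition Smx {R : realType} (m : nat) : 'M[R]_m :=
  2^-1 *: (Im1 m - (Im1 m)^T).

Definition sinc_pt {R : realType} (M : nat) (h T : R) (i : 'I_(2 * M + 1)) : R :=
  let j : R := (i%:R - M%:R) in
  T * expR (j * h) / (1 + expR (j * h)).

Definition Dmx {R : realType} (M : nat) (h T : R) : 'M[R]_(2 * M + 1) :=
  h *: diag_mx (\row_(i < 2 * M + 1) (@sinc_pt R M h T i * (T - @sinc_pt R M h T i) / T)).

Definition spectrum {R : realType} {k : nat} (A : 'M[R]_k) : set R[i] :=
  [set z | root (map_poly (real_complex R) (char_poly A)) z].

(* Since the sinc integral is odd, I^(-1) - S = 1/2 e e^T, so A = P - U W is a rank-n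
   perturbation of P, with U = e (x) I_n and W = 1/2 e^T D (x) K.  Writing
   K = Q^-1 diag(d) Q with spectral projectors E_a, the inverse of P is
   sum_a (I - d_a S D)^-1 (x) E_a.  For skew S and positive diagonal D one has
   ((I - mu S D) x)^T D x = x^T D x, which makes every I - mu S D invertible and
   makes t_a = 1/2 e^T D (I - d_a S D)^-1 e nonnegative.  Sylvester's determinant
   identity reduces the characteristic polynomial of P^-1 A to (X - 1)^(n(m-1))
   times that of I_n - W P^-1 U = Q^-1 diag(1 - d_a t_a) Q, and 1 - d_a t_a >= 1
   because d_a < 0. *)

From HB Require Import structures.
From mathcomp Require Import all_boot all_order all_algebra.
From mathcomp Require Import all_classical all_reals.
From mathcomp Require Import topology normedtype sequences exp trigo measure
  lebesgue_measure lebesgue_integral.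
From mathcomp Require Import complex mxtens.
From mathcomp Require Import derive ftc measurable_realfun.
From mathcomp Require Import ring lra.
Set Implicit Arguments. Unset Strict Implicit. Unset Printing Implicit Defensive.
Import Order.TTheory GRing.Theory Num.Theory numFieldNormedType.Exports.
Local Open Scope ring_scope.

Section Tensor.
Variable F : comNzRingType.

Lemma tensmx11 m n : (1%:M : 'M[F]_m) *t (1%:M : 'M_n) = 1%:M.
Proof.
apply/matrixP => x y.
case: (mxtens_indexP x) => i c; case: (mxtens_indexP y) => j e.
by rewrite tensmxE !mxE (can_eq (@mxtens_indexK m n)) xpair_eqE -natrM mulnb.
Qed.

Lemma tensmxBl m n p q (X Y : 'M[F]_(m, n)) (Z : 'M[F]_(p, q)) :
  (X - Y) *t Z = X *t Z - Y *t Z.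
Proof. by apply/matrixP => i j; rewrite !mxE mulrBl. Qed.

Lemma tensmxDl m n p q (X Y : 'M[F]_(m, n)) (Z : 'M[F]_(p, q)) :
  (X + Y) *t Z = X *t Z + Y *t Z.
Proof. by apply/matrixP => i j; rewrite !mxE mulrDl. Qed.

Lemma tensmxBr m n p q (X : 'M[F]_(m, n)) (Y Z : 'M[F]_(p, q)) :
  X *t (Y - Z) = X *t Y - X *t Z.
Proof. by apply/matrixP => i j; rewrite !mxE mulrBr. Qed.

Lemma tensmxZl m n p q a (X : 'M[F]_(m, n)) (Y : 'M[F]_(p, q)) :
  (a *: X) *t Y = a *: (X *t Y).
Proof. by apply/matrixP => i j; rewrite !mxE mulrA. Qed.

Lemma tensmxZr m n p q a (X : 'M[F]_(m, n)) (Y : 'M[F]_(p, q)) :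
  X *t (a *: Y) = a *: (X *t Y).
Proof. by apply/matrixP => i j; rewrite !mxE mulrCA. Qed.

Lemma tensmx_sumr m n p q I (r : seq I) (P : pred I) (X : 'M[F]_(m, n))
    (Y : I -> 'M[F]_(p, q)) :
  X *t (\sum_(i <- r | P i) Y i) = \sum_(i <- r | P i) X *t Y i.
Proof.
apply/matrixP => i j; rewrite !(mxE, summxE) mulr_sumr.
by apply: eq_bigr => k; rewrite !mxE.
Qed.

Lemma tens_scalar_mxl m n p a (Y : 'M[F]_(n, p)) :
  (a%:M : 'M_m) *t Y = 1%:M *t (a *: Y).
Proof. by rewrite -scalemx1 tensmxZl tensmxZr. Qed.

Lemma char_poly_castmx n n' (e : n = n') (A : 'M[F]_n) :
  char_poly (castmx (e, e) A) = char_poly A.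
Proof. by case: n' / e; rewrite castmx_id. Qed.

Lemma char_poly_tens1mx n (A : 'M[F]_n) :
  char_poly ((1%:M : 'M_1) *t A) = char_poly A.
Proof. by rewrite tens_scalar1mx char_poly_castmx. Qed.
End Tensor.

Section Eigenprojections.
Variables (F : fieldType) (n : nat) (Q : 'M[F]_n) (d : 'rV[F]_n) (K : 'M[F]_n).
Hypothesis Qu : Q \in unitmx.
Hypothesis KE : K = invmx Q *m diag_mx d *m Q.

Definition eigenproj (a : 'I_n) : 'M[F]_n := col a (invmx Q) *m row a Q.

Lemma sum_scale_eigenproj (c : 'rV[F]_n) :
  \sum_a c 0 a *: eigenproj a = invmx Q *m diag_mx c *m Q.
Proof.
apply/matrixP => i j; rewrite summxE mul_mx_diag !mxE.
by apply: eq_bigr => a _; rewrite !mxE big_ord1 !mxE mulrCA mulrA.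
Qed.

Lemma sum_eigenproj : \sum_a eigenproj a = 1%:M.
Proof.
rewrite -(mulVmx Qu) -[invmx Q]mulmx1 -diag_const_mx -sum_scale_eigenproj.
by apply: eq_bigr => a _; rewrite mxE scale1r.
Qed.

Lemma mulmx_eigenproj a : K *m eigenproj a = d 0 a *: eigenproj a.
Proof.
have KQi : K *m invmx Q = invmx Q *m diag_mx d by rewrite KE mulmxK.
rewrite /eigenproj mulmxA scalemxAl; congr (_ *m _); apply/colP => i.
have := congr1 (fun A : 'M_n => A i a) KQi; rewrite mul_mx_diag !mxE mulrC => <-.
by apply: eq_bigr => j _; rewrite !mxE.
Qed.

Lemma eigenproj_mulmx a : eigenproj a *m K = d 0 a *: eigenproj a.
Proof.
have QK : Q *m K = diag_mx d *m Q by rewrite KE -!mulmxA mulKVmx.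
by rewrite /eigenproj -mulmxA -row_mul QK row_mul row_diag_mx -scalemxAl
  -rowE -scalemxAr.
Qed.

Variables (m : nat) (Y : 'M[F]_m).
Hypothesis shift_unit : forall a, 1%:M - d 0 a *: Y \in unitmx.

Lemma mul_tens_resolvent :
  (\sum_a invmx (1%:M - d 0 a *: Y) *t eigenproj a) *m (1%:M - Y *t K) = 1%:M.
Proof.
rewrite [RHS](_ : _ = \sum_a (1%:M : 'M_m) *t eigenproj a); last first.
  by rewrite -tensmx_sumr sum_eigenproj tensmx11.
rewrite mulmx_suml; apply: eq_bigr => a _.
rewrite mulmxBr mulmx1 tensmx_mul eigenproj_mulmx tensmxZr -tensmxZl -tensmxBl.
by rewrite scalemxAr -[X in X - _]mulmx1 -mulmxBr mulVmx.
Qed.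

Lemma unitmx_1subtens : 1%:M - Y *t K \in unitmx.
Proof. by case/mulmx1_unit: mul_tens_resolvent. Qed.

Lemma invmx_1subtens :
  invmx (1%:M - Y *t K) = \sum_a invmx (1%:M - d 0 a *: Y) *t eigenproj a.
Proof.
rewrite -[LHS]mul1mx -[X in X *m invmx _]mul_tens_resolvent.
by rewrite mulmxK ?unitmx_1subtens.
Qed.

Lemma tens_compress_resolvent (c : 'rV[F]_m) (b : 'cV[F]_m) :
  (c *t K) *m invmx (1%:M - Y *t K) *m (b *t 1%:M) = (1%:M : 'M_1) *t
    (invmx Q *m diag_mx (\row_a (d 0 a * (c *m invmx (1%:M - d 0 a *: Y) *m b) 0 0))
     *m Q).
Proof.
rewrite invmx_1subtens mulmx_sumr mulmx_suml -sum_scale_eigenproj tensmx_sumr.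
apply: eq_bigr => a _.
rewrite !tensmx_mul mulmx1 mulmx_eigenproj [_ *m b]mx11_scalar tens_scalar_mxl.
by rewrite scalerA [in RHS]mxE mulrC.
Qed.
End Eigenprojections.

Lemma det_sub_mulmxC (F : comNzRingType) k p (y : F) (U : 'M[F]_(k, p))
    (W : 'M[F]_(p, k)) :
  y ^+ p * \det (y%:M - U *m W) = y ^+ k * \det (y%:M - W *m U).
Proof.
have lower : block_mx 1%:M 0 (- W) y%:M *m block_mx y%:M U W 1%:M
    = block_mx y%:M U 0 (y%:M - W *m U).
  rewrite mulmx_block !mul1mx !mul0mx !addr0 mulmx1 mulNmx mul_mx_scalar.
  by rewrite mul_scalar_mx addNr addrC mulNmx.
have upper : block_mx 1%:M U 0 1%:M *m block_mx (y%:M - U *m W) 0 W 1%:M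
    = block_mx y%:M U W 1%:M.
  by rewrite mulmx_block !mul1mx !mul0mx !mulmx1 ?mulmx0 ?addr0 ?add0r subrK.
have := congr1 determinant lower; rewrite det_mulmx det_lblock det_ublock.
rewrite -upper det_mulmx det_ublock det_lblock !det1 !det_scalar !mul1r !mulr1.
by move=> <-; rewrite mulrC.
Qed.

Lemma char_poly_1sub_mulmxC (F : comNzRingType) k p (V : 'M[F]_(k, p))
    (W : 'M[F]_(p, k)) :
  ('X - 1%:P) ^+ p * char_poly (1%:M - V *m W)
  = ('X - 1%:P) ^+ k * char_poly (1%:M - W *m V).
Proof.
have charE k' p' (V' : 'M[F]_(k', p')) W' : char_poly (1%:M - V' *m W')
    = \det (('X - 1%:P)%:M - map_mx polyC (- V') *m map_mx polyC W').
  rewrite /char_poly /char_poly_mx map_mxB map_mx1 -map_mxM mulNmx map_mxN.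
  by rewrite opprK opprB raddfB /= addrA addrAC.
by rewrite !charE det_sub_mulmxC -!map_mxM mulNmx mulmxN.
Qed.

Lemma char_poly_conj_diag (F : fieldType) n (Q : 'M[F]_n) (e : 'rV[F]_n) :
  Q \in unitmx ->
  char_poly (invmx Q *m diag_mx e *m Q) = \prod_a ('X - (e 0 a)%:P).
Proof.
move=> Qu; have QiQ : map_mx polyC (invmx Q) *m map_mx polyC Q = 1%:M.
  by rewrite -map_mxM mulVmx ?map_mx1.
rewrite /char_poly; have -> : char_poly_mx (invmx Q *m diag_mx e *m Q)
    = map_mx polyC (invmx Q) *m char_poly_mx (diag_mx e) *m map_mx polyC Q.
  rewrite /char_poly_mx mulmxBr mulmxBl mul_mx_scalar -scalemxAl QiQ scalemx1.
  by rewrite !map_mxM.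
rewrite !det_mulmx mulrAC -det_mulmx QiQ det1 mul1r.
rewrite -/(char_poly _) char_poly_trig ?diag_mx_is_trig //.
by apply: eq_bigr => a _; rewrite mxE eqxx.
Qed.

Lemma mem_spectrum_prod_XsubC (R : realType) k (A : 'M[R]_k) (r : seq R) :
  char_poly A = \prod_(x <- r) ('X - x%:P) ->
  forall z, z \in spectrum A <-> z \in map (real_complex R) r.
Proof.
move=> charA z; rewrite inE /spectrum /= charA rmorph_prod /=.
under eq_bigr do rewrite map_polyXsubC.
by rewrite -(big_map _ xpredT (fun x => 'X - x%:P)) root_prod_XsubC.
Qed.

Lemma mem_spectrum_conj_diag (R : realType) n (Q : 'M[R]_n) (e : 'rV[R]_n) a :
  Q \in unitmx -> ((e 0 a)%:C)%C \in spectrum (invmx Q *m diag_mx e *m Q).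
Proof.
move=> Qu; apply/(@mem_spectrum_prod_XsubC _ _ _ (map (e 0) (index_enum 'I_n))).
  by rewrite big_map char_poly_conj_diag.
by rewrite !map_f ?mem_index_enum.
Qed.

Lemma spectrum_ge1 (R : realType) k (B : 'M[R]_k) e n (lam : 'I_n -> R) :
  (forall a, 1 <= lam a) ->
  char_poly B = ('X - 1%:P) ^+ e * \prod_a ('X - (lam a)%:P) ->
  forall z, z \in spectrum B -> exists x, 1 <= x /\ z = (x%:C)%C.
Proof.
move=> lam_ge1 charB z.
have charB_seq : char_poly B =
    \prod_(x <- nseq e 1 ++ map lam (index_enum 'I_n)) ('X - x%:P).
  by rewrite big_cat big_nseq iter_mulr_1 big_map charB.
move/(mem_spectrum_prod_XsubC charB_seq); rewrite map_cat mem_cat.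
case/orP => /mapP [x]; first by rewrite mem_nseq => /andP[_ /eqP ->] ->; exists 1.
by case/mapP => a _ -> ->; exists (lam a).
Qed.


Section SkewTimesPositiveDiagonal.
Variables (R : realFieldType) (m : nat) (S : 'M[R]_m) (dd : 'rV[R]_m).
Hypothesis S_skew : S^T = - S.
Hypothesis dd_gt0 : forall j, 0 < dd 0 j.
Local Notation D := (diag_mx dd).

Lemma skew_form_eq0 (x : 'cV[R]_m) : x^T *m S *m x = 0.
Proof.
set z := x^T *m S *m x.
have zT : z^T = - z by rewrite !trmx_mul trmxK S_skew mulNmx mulmxN mulmxA.
apply/rowP => i; rewrite (ord1 i) [RHS]mxE.
by move/(congr1 (fun A : 'M_1 => A 0 0)): zT; rewrite !mxE; lra.
Qed.

Lemma diag_formE (x : 'cV[R]_m) : (x^T *m D *m x) 0 0 = \sum_j dd 0 j * x j 0 ^+ 2.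
Proof.
by rewrite mul_mx_diag mxE; apply: eq_bigr => j _; rewrite !mxE; ring.
Qed.

Lemma diag_form_ge0 (x : 'cV[R]_m) : 0 <= (x^T *m D *m x) 0 0.
Proof.
by rewrite diag_formE sumr_ge0 // => j _; rewrite mulr_ge0 ?sqr_ge0 ?ltW.
Qed.

Lemma diag_form_eq0 (x : 'cV[R]_m) : (x^T *m D *m x) 0 0 = 0 -> x = 0.
Proof.
rewrite diag_formE => /eqP; rewrite psumr_eq0 => [/allP x0|j _]; last first.
  by rewrite mulr_ge0 ?sqr_ge0 ?ltW.
apply/colP => j; rewrite mxE.
have /x0 : j \in index_enum 'I_m by rewrite mem_index_enum.
by rewrite /= mulf_eq0 gt_eqF //= sqrf_eq0 => /eqP.
Qed.

Lemma shift_form (mu : R) (x : 'cV[R]_m) :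
  ((1%:M - mu *: (S *m D)) *m x)^T *m D *m x = x^T *m D *m x.
Proof.
have := skew_form_eq0 (D *m x); rewrite trmx_mul tr_diag_mx !mulmxA => skew.
rewrite trmx_mul linearB /= trmx1 linearZ /= trmx_mul tr_diag_mx S_skew.
rewrite mulmxBr mulmx1 !mulmxBl -scalemxAr !mulmxA -!scalemxAl mulmxN !mulNmx.
by rewrite skew oppr0 scaler0 subr0.
Qed.

Lemma unitmx_shift_skew_diag (mu : R) : 1%:M - mu *: (S *m D) \in unitmx.
Proof.
rewrite unitmxE unitfE -det_tr; apply/det0P => -[v v0 hv]; move/eqP: v0; apply.
have Ax0 : (1%:M - mu *: (S *m D)) *m v^T = 0.
  by rewrite -[LHS]trmxK trmx_mul trmxK hv trmx0.
have := shift_form mu v^T; rewrite Ax0 trmx0 !mul0mx => /esym/rowP/(_ 0).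
by rewrite [RHS]mxE => /diag_form_eq0 /(congr1 trmx); rewrite trmxK trmx0.
Qed.

Lemma resolvent_form_ge0 (mu : R) (b : 'cV[R]_m) :
  0 <= (b^T *m D *m invmx (1%:M - mu *: (S *m D)) *m b) 0 0.
Proof.
rewrite -mulmxA; set x := invmx _ *m b.
have -> : b = (1%:M - mu *: (S *m D)) *m x by rewrite mulKVmx ?unitmx_shift_skew_diag.
by rewrite shift_form diag_form_ge0.
Qed.
End SkewTimesPositiveDiagonal.

Section PreconditionedSpectrum.
Variables (R : realFieldType) (m n : nat) (S : 'M[R]_m) (dd : 'rV[R]_m).
Variables (Q : 'M[R]_n) (d : 'rV[R]_n) (K : 'M[R]_n) (b : 'cV[R]_m) (w : R).
Hypothesis m_gt0 : (0 < m)%N.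
Hypothesis S_skew : S^T = - S.
Hypothesis dd_gt0 : forall j, 0 < dd 0 j.
Hypothesis Qu : Q \in unitmx.
Hypothesis KE : K = invmx Q *m diag_mx d *m Q.
Hypothesis d_lt0 : forall a, d 0 a < 0.
Hypothesis w_ge0 : 0 <= w.
Local Notation D := (diag_mx dd).
Local Notation P := (1%:M - (S *m D) *t K).
Local Notation A := (1%:M - (S *m D + w *: (b *m (b^T *m D))) *t K).

Definition precond_eigenvalue a : R :=
  1 - d 0 a * ((w *: (b^T *m D)) *m invmx (1%:M - d 0 a *: (S *m D)) *m b) 0 0.

Lemma precond_eigenvalue_ge1 a : 1 <= precond_eigenvalue a.
Proof.
rewrite /precond_eigenvalue lerDl oppr_ge0 nmulr_rle0 //.
by rewrite -!scalemxAl mxE mulr_ge0 // resolvent_form_ge0.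
Qed.

Lemma unitmx_precond : P \in unitmx.
Proof.
by apply: (unitmx_1subtens Qu KE) => a; exact: unitmx_shift_skew_diag.
Qed.

Lemma char_poly_precond :
  char_poly (invmx P *m A) =
  ('X - 1%:P) ^+ (n * (m - 1)) * \prod_a ('X - (precond_eigenvalue a)%:P).
Proof.
set U : 'M_(m * n, 1 * n) := b *t (1%:M : 'M_n).
set W : 'M_(1 * n, m * n) := (w *: (b^T *m D)) *t K.
have AE : A = P - U *m W.
  by rewrite tensmx_mul mul1mx -scalemxAr tensmxDl opprD addrA.
have invPA : invmx P *m A = 1%:M - (invmx P *m U) *m W.
  by rewrite AE mulmxBr mulVmx ?unitmx_precond // mulmxA.
have WPU : W *m (invmx P *m U) = 1%:M *t (invmx Q *m diag_mx
    (\row_a (d 0 a * ((w *: (b^T *m D)) *m invmx (1%:M - d 0 a *: (S *m D)) *m b) 0 0))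
    *m Q).
  rewrite mulmxA (tens_compress_resolvent Qu KE) // => a.
  exact: unitmx_shift_skew_diag.
have IWPU : 1%:M - W *m (invmx P *m U)
    = 1%:M *t (invmx Q *m diag_mx (\row_a precond_eigenvalue a) *m Q).
  rewrite WPU -(@tensmx11 _ 1 n) -tensmxBr; congr (_ *t _).
  rewrite -!sum_scale_eigenproj -(sum_eigenproj Qu) -sumrB.
  by apply: eq_bigr => a _; rewrite [in LHS]mxE [in RHS]mxE scalerBl scale1r.
have := char_poly_1sub_mulmxC (invmx P *m U) W.
rewrite -invPA IWPU char_poly_tens1mx char_poly_conj_diag //.
have -> : ('X - 1%:P) ^+ (m * n)
    = ('X - 1%:P) ^+ n * ('X - 1%:P : {poly R}) ^+ (n * (m - 1)).
  by rewrite -exprD mulnBr muln1 subnKC ?leq_pmulr // mulnC.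
rewrite mul1n -mulrA => /mulfI -> //.
  by congr (_ * _); apply: eq_bigr => a _; rewrite mxE.
by apply: expf_neq0; rewrite polyXsubC_eq0.
Qed.
End PreconditionedSpectrum.

Section SincIntegral.
Context {R : realType}.
Local Open Scope classical_set_scope.

(* [sincpi 0] is the junk value [0 / 0 = 0]; the substitution rule needs the
   continuous extension. *)
Definition sincpi_ext (t : R) : R := if t == 0 then 1 else sincpi t.

Lemma sincpiN (t : R) : sincpi (- t) = sincpi t.
Proof. by rewrite /sincpi mulrN sinN invrN mulrNN. Qed.

Lemma sincpi_extN (t : R) : sincpi_ext (- t) = sincpi_ext t.
Proof. by rewrite /sincpi_ext oppr_eq0 sincpiN. Qed.

Lemma sincpi_ext_cvg0 : sincpi_ext @ (0 : R)^' --> (1 : R).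
Proof.
have sin_derivable : derivable (@sin R) 0 pi.
  by apply/diff_derivable/derivable1_diffP; exact: derivable_sin.
have sin'0 : 'D_pi (@sin R) 0 = pi.
  rewrite deriveE; last by apply/derivable1_diffP; exact: derivable_sin.
  rewrite -[pi in LHS]mulr1 -[pi * 1]/(pi *: (1 : R)) linearZ /= -deriveE.
    by rewrite derive_val cos0 [_ *: _]mulr1.
  by apply/derivable1_diffP; exact: derivable_sin.
have := cvgP _ sin_derivable; rewrite -[lim _]/('D_pi (@sin R) 0) sin'0 => sin_cvg.
have -> : (1 : R) = pi^-1 * pi by rewrite mulVf // gt_eqF // pi_gt0.
apply: cvg_trans; last exact: (cvgM (cvg_cst (pi^-1 : R)) sin_cvg).
apply: near_eq_cvg; near=> t.
have t0 : t != 0 by near: t; exact: nbhs_dnbhs_neq.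
rewrite /sincpi_ext (negbTE t0) /sincpi /= sin0 subr0 addr0.
rewrite -[t *: pi]/(t * pi) -[t^-1 *: _]/(t^-1 * _) [t * pi]mulrC invfM.
by ring.
Unshelve. all: end_near. Qed.

Lemma continuous_sincpi (t : R) : t != 0 -> {for t, continuous (@sincpi R)}.
Proof.
move=> t0; apply: continuousM.
  apply: continuous_comp; last exact: continuous_sin.
  by apply: cvgM; [exact: cvg_cst|exact: cvg_id].
apply: continuousV; first by rewrite mulf_neq0 // gt_eqF // pi_gt0.
by apply: cvgM; [exact: cvg_cst|exact: cvg_id].
Qed.

Lemma continuous_sincpi_ext : continuous sincpi_ext.
Proof.
move=> t; have [->|t0] := eqVneq t 0.
  by apply/continuous_withinNx; rewrite {2}/sincpi_ext eqxx; exact: sincpi_ext_cvg0.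
have near_t_neq0 : \forall x \near t, x != 0.
  by apply: open_nbhs_nbhs; split => //; exact: open_neq.
have ext_t : sincpi_ext t = sincpi t by rewrite /sincpi_ext (negbTE t0).
suff : sincpi_ext @ t --> sincpi t by rewrite -ext_t.
apply: cvg_trans; last exact: (continuous_sincpi t0).
apply: near_eq_cvg; near=> x.
by rewrite /sincpi_ext (negbTE (near near_t_neq0 x _)).
Unshelve. all: end_near. Qed.

Lemma integral_sincpi_ext (a b : R) : ~ (a < 0 < b) ->
  (\int[lebesgue_measure]_(t in `[a, b]) (sincpi t)%:E)%E =
  (\int[lebesgue_measure]_(t in `[a, b]) (sincpi_ext t)%:E)%E.
Proof.
move=> not_a0b.
have mext : measurable_fun setT sincpi_ext :=
  continuous_measurable_fun continuous_sincpi_ext.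
have ext_inner t : a < t -> t < b -> sincpi_ext t = sincpi t.
  move=> a_t t_b; rewrite /sincpi_ext; case: eqP => // t0; exfalso; apply: not_a0b.
  by rewrite -t0 a_t t_b.
apply: eq_integral_itv_bounded => //.
- apply: eq_measurable_fun (measurable_funTS mext).
  by move=> t; rewrite inE /= in_itv /= => /andP[a_t t_b]; rewrite ext_inner.
- exact: measurable_funTS.
- by move=> t; rewrite in_itv /= => /andP[a_t t_b]; rewrite ext_inner.
Qed.

Lemma Rintegral_sincpi_reflect (x : R) : 0 <= x ->
  (\int[lebesgue_measure]_(t in `[- x, 0]) sincpi t)%R =
  (\int[lebesgue_measure]_(t in `[0, x]) sincpi t)%R.
Proof.
move=> x0; rewrite /Rintegral; congr fine.
rewrite integral_sincpi_ext; last by rewrite ltxx andbF.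
rewrite integral_sincpi_ext; last by rewrite ltxx.
rewrite -{1}oppr0 integration_by_substitution_oppr //.
  by apply: eq_integral => t _ /=; rewrite sincpi_extN.
exact: continuous_subspaceT continuous_sincpi_ext.
Qed.

Lemma SiN (x : R) : Si (- x) = - Si x.
Proof.
rewrite /Si oppr_ge0.
have [x0|x0|->] := ltgtP x 0.
- by rewrite opprK -[in RHS](opprK x) Rintegral_sincpi_reflect // oppr_ge0 ltW.
- by rewrite Rintegral_sincpi_reflect // ltW.
- by rewrite oppr0 set_itv1 /Rintegral integral_set1 /= oppr0.
Qed.

End SincIntegral.

Section SincMatrices.
Context {R : realType}.

Lemma Im1_add_tr m : Im1 m + (Im1 m)^T = const_mx 1 :> 'M[R]_m.
Proof. by apply/matrixP => l j; rewrite !mxE -opprB SiN; field. Qed.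

Lemma Smx_skew m : (Smx m)^T = - Smx m :> 'M[R]_m.
Proof. by rewrite /Smx linearZ /= linearB /= trmxK -scalerN opprB. Qed.

Lemma Im1E m : Im1 m = Smx m + 2^-1 *: const_mx 1 :> 'M[R]_m.
Proof. by rewrite -Im1_add_tr /Smx; apply/matrixP => i j; rewrite !mxE; field. Qed.

Lemma Im1_mulmx m n (X : 'M[R]_(m, n)) :
  Im1 m *m X = Smx m *m X
    + 2^-1 *: ((const_mx 1 : 'cV_m) *m ((const_mx 1 : 'cV_m)^T *m X)).
Proof.
rewrite Im1E mulmxDl -[(_ *: const_mx _) *m _]scalemxAl mulmxA.
congr (_ + _ *: (_ *m _)).
by apply/matrixP => i j; rewrite !mxE big_ord1 !mxE mul1r.
Qed.

Lemma sinc_pt_itv (M : nat) (h T : R) (i : 'I_(2 * M + 1)) :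
  0 < T -> 0 < sinc_pt h T i < T.
Proof.
move=> T0; rewrite /sinc_pt; set e := expR _; have e0 : 0 < e := expR_gt0 _.
rewrite divr_gt0 ?mulr_gt0 ?addr_gt0 //= ltr_pdivrMr ?addr_gt0 //; nra.
Qed.

Lemma Dmx_pos_diag (M : nat) (h T : R) : 0 < h -> 0 < T ->
  exists2 dd, Dmx M h T = diag_mx dd & forall j, 0 < dd 0 j.
Proof.
move=> h0 T0; exists (h *: \row_i (sinc_pt h T i * (T - sinc_pt h T i) / T)).
  by apply/matrixP => i j; rewrite !mxE mulrnAr.
move=> j; have /andP[t0 tT] := sinc_pt_itv h j T0.
by rewrite !mxE mulr_gt0 // divr_gt0 // mulr_gt0 // subr_gt0.
Qed.
End SincMatrices.

Theorem theorem3p3 (R : realType) (M n : nat) (h T : R)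
  (K : 'M[R]_n) :
  (1 <= M)%N -> 0 < h -> 0 < T ->
  diagonalizable K ->
  (forall z : R[i], z \in spectrum K -> exists x : R, x < 0 /\ z = (x%:C)%C) ->
  let m := (2 * M + 1)%N in
  let A : 'M[R]_(m * n) := 1%:M - (Im1 m *m Dmx M h T) *t K in
  let P : 'M[R]_(m * n) := 1%:M - (Smx m *m Dmx M h T) *t K in
  [/\ P \in unitmx,
      (('X - 1%:P) ^+ (n * (m - 1)) %| char_poly (invmx P *m A))%R &
      (forall z : R[i], z \in spectrum (invmx P *m A) ->
          exists x : R, 1 <= x /\ z = (x%:C)%C)].
Proof.
move=> _ h0 T0 [Q Qu /(diagonalizable_forLR Qu) [d KE]] specK m A P.
rewrite mxpoly.conjVmx // in KE.
have d_lt0 a : d 0 a < 0.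
  have := mem_spectrum_conj_diag d a Qu.
  by rewrite -KE => /specK [x [x_lt0 /complexI ->]].
have [dd DE dd_gt0] := Dmx_pos_diag M h0 T0.
have m_gt0 : (0 < m)%N by rewrite /m addn1.
have PE : P = 1%:M - (Smx m *m diag_mx dd) *t K by rewrite /P DE.
set e : 'cV[R]_m := const_mx 1.
have AE : A = 1%:M - (Smx m *m diag_mx dd + 2^-1 *: (e *m (e^T *m diag_mx dd))) *t K.
  by rewrite /A DE Im1_mulmx.
have charPA := char_poly_precond e 2^-1 m_gt0 (Smx_skew m) dd_gt0 Qu KE.
rewrite -PE -AE in charPA.
split.
- by rewrite PE (unitmx_precond (Smx_skew m) dd_gt0 Qu KE).
- by rewrite charPA dvdp_mulr.
apply: spectrum_ge1 charPA => a.
by apply: (precond_eigenvalue_ge1 _ (Smx_skew m) dd_gt0 d_lt0); rewrite invr_ge0.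
Qed.
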